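(* Let $n\ge1$, let $B=\{\cos(\theta)|0\rangle+\sin(\theta)|1\rangle\mid 0\le\theta<2\pi\}$ be the set of real-amplitude one-qubit pure states, and let $\mathcal S=B^{\otimes n}=\{|b_1\rangle\otimes\cdots\otimes|b_n\rangle\mid |b_j\rangle\in B\}$. Let $\sigma_0=\begin{pmatrix}1&0\\0&1\end{pmatrix}$, $\sigma_2=\begin{pmatrix}0&-i\\i&0\end{pmatrix}$, and for $x\in\{0,2\}^n$ let $\overline{\sigma_x}=\sigma_{x_1}\otimes\cdots\otimes\sigma_{x_n}$. Let $\mathcal E=\{\frac{1}{\sqrt{2^n}}\overline{\sigma_x}\mid x\in\{0,2\}^n\}$. Then $[\mathcal S,\mathcal E,\tilde I_{2^n}]$ is a private quantum channel; that is, for every $|\phi\rangle\in\mathcal S$, $$\sum_{x\in\{0,2\}^n}\frac{1}{2^n}\overline{\sigma_x}\,|\phi\rangle\langle\phi|\,\overline{\sigma_x}^\dagger=\tilde I_{2^n}.$$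
   Context: $\mathcal{H}_{2^n}$ denotes the Hilbert space of $n$ qubits; $\tilde I_{M}=\frac1M I_M$ is the totally mixed state. A superoperator $\mathcal{E}=\{\sqrt{p_i}U_i\mid 1\le i\le N\}$ (with $U_i$ unitary, $p_i\ge0$, $\sum_ip_i=1$) acts by $\mathcal{E}(\rho)=\sum_ip_iU_i\rho U_i^\dagger$. Definition (private quantum channel, PQC): let $\mathcal S\subseteq\mathcal H_{2^n}$ be a set of pure $n$-qubit states, $\mathcal E=\{\sqrt{p_i}U_i\}$ with each $U_i$ unitary on $\mathcal H_{2^m}$, $\rho_a$ an $(m-n)$-qubit density matrix, $\rho_0$ an $m$-qubit density matrix. Then $[\mathcal S,\mathcal E,\rho_a,\rho_0]$ is a PQC iff for all $|\phi\rangle\in\mathcal S$, $\sum_ip_iU_i(|\phi\rangle\langle\phi|\otimes\rho_a)U_i^\dagger=\rho_0$. When $m=n$ (no ancilla) $\rho_a$ is omitted and one writes $[\mathcal S,\mathcal E,\rho_0]$. *)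

From HB Require Import structures.
From mathcomp Require Import all_boot all_order all_algebra.
From mathcomp Require Import reals trigo.
From mathcomp Require Import complex mxtens.
Set Implicit Arguments. Unset Strict Implicit. Unset Printing Implicit Defensive.
Import Order.TTheory GRing.Theory Num.Theory.
Local Open Scope ring_scope.
Local Open Scope complex_scope.

Section Defs.
Variable R : realType.
Local Notation C := R[i].

Definition adj {m n} (A : 'M[C]_(m, n)) : 'M[C]_(n, m) := (map_mx (@conjc R) A)^T.

Fixpoint kron {a b : nat} (n : nat) : ('I_n -> 'M[C]_(a, b)) -> 'M[C]_(a ^ n, b ^ n) :=
  match n return ('I_n -> 'M[C]_(a, b)) -> 'M[C]_(a ^ n, b ^ n) with
  | 0 => fun _ => \matrix_(i, j) 1
  | k.+1 => fun A =>
      castmx (esym (expnS a k), esym (expnS b k))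
        (A ord0 *t kron (fun i : 'I_k => A (lift ord0 i)))
  end.

Definition ket_theta (t : R) : 'cV[C]_2 :=
  \col_(i < 2) (if i == ord0 then (cos t)%:C else (sin t)%:C).

Definition Bset (v : 'cV[C]_2) : Prop :=
  exists t : R, [/\ 0 <= t, t < 2 * pi & v = ket_theta t].

Definition Sset (n : nat) (phi : 'cV[C]_(2 ^ n)) : Prop :=
  exists b : 'I_n -> 'cV[C]_2, (forall j, Bset (b j)) /\ phi = castmx (erefl, exp1n n) (kron b).

Definition sigma0 : 'M[C]_2 := 1%:M.
Definition sigma2 : 'M[C]_2 :=
  \matrix_(i < 2, j < 2)
    (if (i == ord0) && (j == ord0) then 0
     else if i == ord0 then - 'i
     else if j == ord0 then 'i
     else 0).

(* Index x in {0,2}^n, encoded as x : {ffun 'I_n -> bool} with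
   false |-> 0 and true |-> 2. *)
Definition sigma_of (b : bool) : 'M[C]_2 := if b then sigma2 else sigma0.
Definition sigma_bar (n : nat) (x : {ffun 'I_n -> bool}) : 'M[C]_(2 ^ n) :=
  kron (fun j => sigma_of (x j)).

(* Superoperator given by Kraus operators K_i (here K_i = sqrt(p_i) U_i):
   E(rho) = sum_i K_i rho K_i^dagger. *)
Definition apply_so {I : finType} {m : nat} (K : I -> 'M[C]_m) (rho : 'M[C]_m)
  : 'M[C]_m := \sum_(i : I) K i *m rho *m adj (K i).

(* Private quantum channel [S, E, rho0] without ancilla (m = n). *)
Definition PQC {I : finType} {m : nat} (S : 'cV[C]_m -> Prop) (K : I -> 'M[C]_m)
  (rho0 : 'M[C]_m) : Prop :=
  forall phi, S phi -> apply_so K (phi *m adj phi) = rho0.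

Definition mixed (M : nat) : 'M[C]_M := (M%:R)^-1 *: 1%:M.

Definition E_pauli (n : nat) (x : {ffun 'I_n -> bool}) : 'M[C]_(2 ^ n) :=
  ((Num.sqrt (2 ^+ n : R))%:C)^-1 *: sigma_bar x.

End Defs.

(* Each Kraus operator is a Kronecker product of one-qubit Paulis, and so is
   |phi><phi| for a product state; since sums over {0,2}^n of Kronecker
   products factor, the channel output is the Kronecker product of the
   one-qubit twirls  rho + Y rho Y^dagger.  For a real pure state
   rho = [[c^2, cs], [cs, s^2]] one has  Y rho Y^dagger = [[s^2, -cs], [-cs, c^2]],
   so each twirl is the identity, and the prefactor 1/sqrt(2^n) squared
   leaves I / 2^n. *)
From HB Require Import structures.
From mathcomp Require Import all_boot all_order all_algebra.
From mathcomp Require Import reals trigo.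
From mathcomp Require Import complex mxtens.
From mathcomp Require Import lra.
Import GRing.Theory Num.Theory.
Local Open Scope ring_scope.

Section CastTensor.
Variable K : pzRingType.

Lemma castmx_mulmx m m' n n' p p' (em : m = m') (en en' : n = n') (ep : p = p')
    (A : 'M[K]_(m, n)) (B : 'M[K]_(n, p)) :
  castmx (em, en) A *m castmx (en', ep) B = castmx (em, ep) (A *m B).
Proof.
rewrite (eq_irrelevance en' en); clear en'.
by case: m' / em; case: n' / en; case: p' / ep; rewrite !castmx_id.
Qed.

Lemma castmx_sum m m' n n' (e : (m = m') * (n = n')) (I : finType)
    (F : I -> 'M[K]_(m, n)) :
  castmx e (\sum_i F i) = \sum_i castmx e (F i).
Proof.
case: e => em en; case: m' / em; case: n' / en.
by rewrite castmx_id; apply: eq_bigr => i _; rewrite castmx_id.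
Qed.

Lemma castmx1 m m' (e e' : m = m') : castmx (e, e') (1%:M : 'M[K]_m) = 1%:M.
Proof. by rewrite (eq_irrelevance e' e); clear e'; case: m' / e; rewrite castmx_id. Qed.

Lemma tensmx_sumr m n p q (I : finType) (A : 'M[K]_(m, n)) (B : I -> 'M[K]_(p, q)) :
  A *t (\sum_i B i) = \sum_i A *t B i.
Proof.
apply/matrixP => i j; rewrite !mxE !summxE mulr_sumr.
by apply: eq_bigr => k _; rewrite !mxE.
Qed.

Lemma tensmx_suml m n p q (I : finType) (A : I -> 'M[K]_(m, n)) (B : 'M[K]_(p, q)) :
  (\sum_i A i) *t B = \sum_i A i *t B.
Proof.
apply/matrixP => i j; rewrite !mxE !summxE mulr_suml.
by apply: eq_bigr => k _; rewrite !mxE.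
Qed.

Lemma tensmx11 m n : (1%:M : 'M[K]_m) *t (1%:M : 'M[K]_n) = 1%:M.
Proof.
apply/matrixP => i j.
case: (mxtens_indexP i) => i0 i1; case: (mxtens_indexP j) => j0 j1.
rewrite tensmxE !mxE -natrM -!val_eqE /=.
by rewrite eq_addl_mul ?ltn_ord // xpair_eqE mulnb.
Qed.

End CastTensor.

Section FinfunCons.
Variable T : finType.

Definition ffun_cons {n} (c : T) (y : {ffun 'I_n -> T}) : {ffun 'I_n.+1 -> T} :=
  [ffun i => if unlift ord0 i is Some k then y k else c].

Lemma sum_ffunS (V : nmodType) n (G : {ffun 'I_n.+1 -> T} -> V) :
  \sum_x G x = \sum_(c : T) \sum_(y : {ffun 'I_n -> T}) G (ffun_cons c y).
Proof.
rewrite pair_big /= (reindex (fun p => ffun_cons p.1 p.2)) //.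
exists (fun x : {ffun 'I_n.+1 -> T} => (x ord0, [ffun k : 'I_n => x (lift ord0 k)]))
  => [[c y] _ | x _] /=.
  rewrite ffunE unlift_none; congr (_, _).
  by apply/ffunP => k; rewrite !ffunE liftK.
by apply/ffunP => i; rewrite ffunE; case: unliftP => [k|] ->; rewrite ?ffunE.
Qed.

End FinfunCons.

Section Kronecker.
Variable R : realType.
Local Notation C := R[i].
Local Open Scope complex_scope.

Lemma adj_castmx m m' n n' (em : m = m') (en : n = n') (A : 'M[C]_(m, n)) :
  adj (castmx (em, en) A) = castmx (en, em) (adj A).
Proof. by case: m' / em; case: n' / en; rewrite !castmx_id. Qed.

Lemma adj_tensmx m n p q (A : 'M[C]_(m, n)) (B : 'M[C]_(p, q)) :
  adj (A *t B) = adj A *t adj B.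
Proof. by rewrite /adj map_mxT trmx_tens. Qed.

Lemma adj_scalemx m n c (A : 'M[C]_(m, n)) : adj (c *: A) = c^* *: adj A.
Proof. by apply/matrixP => i j; rewrite !mxE rmorphM. Qed.

Lemma eq_kron a b n (A B : 'I_n -> 'M[C]_(a, b)) :
  (forall j, A j = B j) -> kron A = kron B.
Proof.
elim: n A B => [|n IHn] A B eqAB //=.
by rewrite eqAB (IHn _ (fun i => B (lift ord0 i))).
Qed.

Lemma kron_mulmx a b c n (A : 'I_n -> 'M[C]_(a, b)) (B : 'I_n -> 'M[C]_(b, c)) :
  kron A *m kron B = kron (fun j => A j *m B j).
Proof.
elim: n A B => [|n IHn] A B /=.
  by apply/matrixP => i j; rewrite !mxE big_ord1 !mxE mulr1.
by rewrite castmx_mulmx tensmx_mul IHn.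
Qed.

Lemma adj_kron a b n (A : 'I_n -> 'M[C]_(a, b)) :
  adj (kron A) = kron (fun j => adj (A j)).
Proof.
elim: n A => [|n IHn] A /=.
  by apply/matrixP => i j; rewrite !mxE conjc1.
by rewrite adj_castmx adj_tensmx IHn.
Qed.

Lemma kron1 a n : kron (fun _ : 'I_n => (1%:M : 'M[C]_a)) = 1%:M.
Proof.
elim: n => [|n IHn] /=; first by apply/matrixP => i j; rewrite !mxE !ord1 eqxx.
by rewrite IHn tensmx11 castmx1.
Qed.

Lemma sum_kron (T : finType) a b n (F : 'I_n -> T -> 'M[C]_(a, b)) :
  \sum_(x : {ffun 'I_n -> T}) kron (fun j => F j (x j)) =
  kron (fun j => \sum_(c : T) F j c).
Proof.
elim: n F => [|n IHn] F.
  by rewrite /= sumr_const card_ffun card_ord expn0.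
rewrite sum_ffunS /= tensmx_suml castmx_sum; apply: eq_bigr => c _.
rewrite -IHn tensmx_sumr castmx_sum; apply: eq_bigr => y _.
rewrite ffunE unlift_none; congr (castmx _ (_ *t _)).
by apply: eq_kron => j; rewrite ffunE liftK.
Qed.

Lemma pauli_twirl_ket_theta (t : R) :
  \sum_(c : bool) sigma_of R c *m (ket_theta t *m adj (ket_theta t)) *m adj (sigma_of R c)
  = 1%:M.
Proof.
rewrite big_bool /= /sigma0 mul1mx /adj map_mx1 trmx1 mulmx1.
apply/matrixP => i j; rewrite !(mxE, big_ord_recl, big_ord0) /=.
have cos2Dsin2_t := cos2Dsin2 t.
case: i => [[|[|//]] ?]; case: j => [[|[|//]] ?] /=.
all: simpc; apply/eqP; rewrite eq_complex /= eqxx andbT; apply/eqP.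
all: rewrite -?expr2 in cos2Dsin2_t *; nra.
Qed.

Lemma conj_invsqrtC_mul_invsqrtC (x : R) : 0 <= x ->
  ((Num.sqrt x)%:C)^-1^* / (Num.sqrt x)%:C = (x%:C)^-1.
Proof.
move=> x_ge0; rewrite geC0_conj; last by rewrite invr_ge0 ler0c sqrtr_ge0.
by rewrite -invfM -rmorphM -expr2 sqr_sqrtr.
Qed.

End Kronecker.

Theorem theorem3 (R : realType) (n : nat) (hn : (1 <= n)%N) :
  PQC (@Sset R n) (@E_pauli R n) (@mixed R (2 ^ n)).
Proof.
move=> phi [b [Bb ->]].
rewrite /apply_so /E_pauli adj_castmx castmx_mulmx castmx_id.
under eq_bigr => x _ do rewrite adj_scalemx -scalemxAr -!scalemxAl scalerA.
rewrite -scaler_sumr /sigma_bar.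
under eq_bigr => x _ do rewrite !adj_kron !kron_mulmx.
rewrite (@sum_kron R _ _ _ _ (fun j c => sigma_of R c *m (b j *m adj (b j)) *m adj (sigma_of R c))).
rewrite (@eq_kron R _ _ _ _ (fun _ => 1%:M)); last first.
  by move=> j; have [t [_ _ ->]] := Bb j; exact: pauli_twirl_ket_theta.
rewrite kron1 conj_invsqrtC_mul_invsqrtC ?exprn_ge0 ?ler0n //.
by rewrite /mixed rmorphXn rmorph_nat natrX.
Qed.
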